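(* Let $z\in\mathbb{N}$, $z\ge1$, and let $w\in\{0,1\}^*$ be the standard binary representation of $z$ (no leading zeros). Let $(o_k)_{k\ge0}$ be the sequence of odd terms of the Collatz sequence $z,T(z),T^2(z),\dots$, listed in order of occurrence (so $o_0$ is the first odd term). Then for every $y_0\le0$, in the limit configuration $c_\infty[w]$ the cells of row $y_0$ whose sum bit is defined (i.e. not $\bot$) are exactly the cells $(x,y_0)$ with $x\le x_1$ for some integer $x_1$, only finitely many of these sum bits equal $1$, and, writing $b_x$ for the sum bit of $(x,y_0)$, one has $\sum_{x\le x_1} b_x\,2^{x_1-x}=2^{m}\,o_{|y_0|}$ for some integer $m\ge0$. (That is, row $y_0$ reads, west to east, $0^\infty u\,0^m$ where $u$ is the binary representation of $o_{|y_0|}$.)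
   Context: The Collatz map $T:\mathbb{N}\to\mathbb{N}$ is $T(x)=x/2$ for even $x$ and $T(x)=(3x+1)/2$ for odd $x$. Notation: $E=(1,0)$, $W=(-1,0)$, $N=(0,1)$, $S=(0,-1)$ in $\mathbb{Z}^2$; $[P]\in\{0,1\}$ equals $1$ iff $P$ holds. Strings are indexed from the right: $w=w_{k-1}\cdots w_0$. The CQCA. State set $\Sigma=\{0,1,\bot\}^2\setminus\{(\bot,0),(\bot,1)\}$; a state $(s,c)$ has sum bit $s$ and carry bit $c$. A state is undefined if it is $(\bot,\bot)$, half-defined if $s\in\{0,1\}$ and $c=\bot$, and defined if $s,c\in\{0,1\}$. A configuration is a map $C:\mathbb{Z}^2\to\Sigma$. One step $F(C)$: first the non-local rule produces $C'$: for each $u$, $C'(u)=(0,1)$ if $C(u+W)=(1,\bot)$, $C(u)\in\{(0,\bot),(\bot,\bot)\}$, and $C(u+iE)\in\{(0,\bot),(\bot,\bot)\}$ for all integers $i\ge1$; otherwise $C'(u)=C(u)$. Then the local rule is applied to $C'$ at every cell simultaneously: (i) if $C'(u)=(s,\bot)$ with $s\in\{0,1\}$ and $C'(u+E)=(s',c')$ is defined, then $F(C)(u)=(s,[s+s'+c'\ge2])$; (ii) if $C'(u)=(\bot,\bot)$, $C'(u+N)=(s,\bot)$ is half-defined and $C'(u+N+E)=(s',c')$ is defined, then $F(C)(u)=((s+s'+c')\bmod 2,\bot)$; (iii) otherwise $F(C)(u)=C'(u)$. For $w\in\{0,1\}^*$ the initial configuration $c_0[w]$ is: $c_0[w](-i,0)=(w_{i-1},\bot)$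 for $1\le i\le|w|$, $c_0[w](-i,0)=(0,\bot)$ for $i>|w|$, and $(\bot,\bot)$ elsewhere. Every cell's state in $F^i(c_0[w])$ is eventually constant in $i$; $c_\infty[w]$ denotes the pointwise limit. *)

From Stdlib Require Import ZArith List Arith Classical ClassicalEpsilon.
Import ListNotations.
Open Scope Z_scope.

Definition collatzT (x : nat) : nat :=
  if Nat.even x then Nat.div2 x else Nat.div2 (3 * x + 1).

Definition kth_odd_term (z k o : nat) : Prop :=
  exists n : nat,
    Nat.iter n collatzT z = o /\ Nat.odd o = true /\
    length (filter (fun j => Nat.odd (Nat.iter j collatzT z)) (seq 0 n)) = k.

(** Standard binary representation (no leading zeros) of a positive
    number, written most-significant bit first, i.e. as the string
    w_{k-1} ... w_0. *)
Fixpoint binrep (p : positive) : list bool :=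
  match p with
  | xH => [true]
  | xO q => binrep q ++ [false]
  | xI q => binrep q ++ [true]
  end.

(** CQCA states: Σ = {0,1,⊥}^2 \ {(⊥,0),(⊥,1)}. *)
Inductive state : Type :=
  | Und                         (* (⊥,⊥) *)
  | Half (s : bool)             (* (s,⊥) *)
  | Def (s c : bool).           (* (s,c) *)

Definition cell := (Z * Z)%type.
Definition config := cell -> state.

Definition addc (u v : cell) : cell := (fst u + fst v, snd u + snd v).
Definition dirE : cell := (1, 0).
Definition dirW : cell := (-1, 0).
Definition dirN : cell := (0, 1).
Definition dirS : cell := (0, -1).
Definition scal (i : Z) (v : cell) : cell := (i * fst v, i * snd v).

Definition b2z (b : bool) : Z := if b then 1 else 0.

Definition zero_or_und (st : state) : Prop := st = Half false \/ st = Und.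

Definition nonlocal_cond (C : config) (u : cell) : Prop :=
  C (addc u dirW) = Half true /\ zero_or_und (C u) /\
  (forall i : Z, 1 <= i -> zero_or_und (C (addc u (scal i dirE)))).

Definition nonlocal_step (C : config) : config :=
  fun u => if excluded_middle_informative (nonlocal_cond C u)
           then Def false true else C u.

Definition local_step (C' : config) : config :=
  fun u =>
    match C' u with
    | Half s =>
        match C' (addc u dirE) with
        | Def s' c' => Def s (2 <=? b2z s + b2z s' + b2z c')
        | _ => C' u
        end
    | Und =>
        match C' (addc u dirN) with
        | Half s =>
            match C' (addc (addc u dirN) dirE) with
            | Def s' c' => Half (Z.odd (b2z s + b2z s' + b2z c'))
            | _ => C' u
            end
        | _ => C' u
        end
    | Def _ _ => C' u
    end.

Definition F (C : config) : config := local_step (nonlocal_step C).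

(** Initial configuration c_0[w]; w = w_{k-1} ... w_0 is given as a list
    read left to right, so w_{i-1} = nth (|w| - i) w. *)
Definition c0 (w : list bool) : config :=
  fun u =>
    let '(x, y) := u in
    if andb (y =? 0) (x <=? -1) then
      let i := Z.to_nat (- x) in
      if (i <=? length w)%nat then Half (nth (length w - i) w false)
      else Half false
    else Und.

Definition is_limit (w : list bool) (L : config) : Prop :=
  forall u : cell, exists N : nat, forall i : nat, (N <= i)%nat ->
    Nat.iter i F (c0 w) u = L u.

Definition sumbit (st : state) : option bool :=
  match st with
  | Und => None
  | Half s => Some s
  | Def s _ => Some s
  end.

Fixpoint rowval (L : config) (y0 x1 : Z) (n : nat) : Z :=
  match n with
  | O => 0
  | S n' => rowval L y0 x1 n' +
      (match sumbit (L (x1 - Z.of_nat n', y0)) with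
       | Some true => 2 ^ Z.of_nat n' | _ => 0 end)
  end.

From Stdlib Require Import ZArith List Arith Bool Lia ClassicalEpsilon FunctionalExtensionality.
Import ListNotations.
Open Scope Z_scope.

(** Write [z = 2^(j_0) o_0] and [3 o_k + 1 = 2^(j_(k+1)) o_(k+1)] with every
    [o_k] odd; the [o_k] are exactly the odd terms of the Collatz orbit of [z].
    Rather than reasoning about the limit directly, we give a closed form
    [snapshot p t] of the configuration [F^t (c0 (binrep p))] at every time
    [t]: row [-k] holds the binary digits of [o_k] (least significant bit just
    west of the column [anchor p k]) followed by [j_k] half-defined zeros, and
    its carry bits are those of the ripple-carry addition
    [o_k + 2 o_k + 1 = 3 o_k + 1].  Definedness spreads like a light cone
    whose timing is linear arithmetic in [anchor] and [birth].

    Every cell stabilises, so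
    row [y0] of the limit is the final row of the snapshots, from which the
    main theorem is read off. *)

(** * Ripple-carry addition on [Z]

    The CQCA computes [3 o + 1] as the sum [o + 2 o + 1] by a ripple-carry
    adder whose carry-in at bit 0 is 1 (this is what the non-local rule
    injects).  [carry_in A B p] is the carry entering bit [p] of [A + B + 1]. *)
Definition carry_in (A B p : Z) : Z := (A mod 2^p + B mod 2^p + 1) / 2^p.

Lemma mod_pow2_succ (A p : Z) : 0 <= p ->
  A mod 2^(p+1) = A mod 2^p + 2^p * Z.b2z (Z.testbit A p).
Proof.
  intros Hp. rewrite Z.pow_add_r, Z.rem_mul_r by lia.
  rewrite Z.testbit_spec' by lia. reflexivity.
Qed.

Lemma carry_in_range A B p : 0 <= p -> 0 <= carry_in A B p <= 1.
Proof.
  intros Hp. unfold carry_in. pose proof (Z.pow_pos_nonneg 2 p ltac:(lia) Hp).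
  pose proof (Z.mod_pos_bound A (2^p) ltac:(lia)).
  pose proof (Z.mod_pos_bound B (2^p) ltac:(lia)).
  split; [apply Z.div_pos; lia|].
  apply Z.lt_succ_r, Z.div_lt_upper_bound; lia.
Qed.

Lemma carry_in_0 A B : carry_in A B 0 = 1.
Proof. unfold carry_in. simpl. rewrite !Z.mod_1_r. reflexivity. Qed.

Lemma carry_in_succ A B p : 0 <= p ->
  carry_in A B (p+1) =
  (Z.b2z (Z.testbit A p) + Z.b2z (Z.testbit B p) + carry_in A B p) / 2.
Proof.
  intros Hp. unfold carry_in. pose proof (Z.pow_pos_nonneg 2 p ltac:(lia) Hp).
  rewrite !mod_pow2_succ by lia.
  rewrite Z.pow_add_r, <- Z.div_div by lia. f_equal.
  replace (A mod 2 ^ p + 2 ^ p * Z.b2z (Z.testbit A p) +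
           (B mod 2 ^ p + 2 ^ p * Z.b2z (Z.testbit B p)) + 1)
    with ((A mod 2^p + B mod 2^p + 1)
          + (Z.b2z (Z.testbit A p) + Z.b2z (Z.testbit B p)) * 2^p) by ring.
  rewrite Z.div_add by lia. ring.
Qed.

Lemma testbit_add_carry A B p : 0 <= p ->
  Z.b2z (Z.testbit (A + B + 1) p) =
  (Z.b2z (Z.testbit A p) + Z.b2z (Z.testbit B p) + carry_in A B p) mod 2.
Proof.
  intros Hp. pose proof (Z.pow_pos_nonneg 2 p ltac:(lia) Hp).
  assert (Hquot : (A + B + 1) / 2^p = A / 2^p + B / 2^p + carry_in A B p).
  { unfold carry_in.
    pose proof (Z.div_mod A (2^p) ltac:(lia)). pose proof (Z.div_mod B (2^p) ltac:(lia)).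
    replace (A + B + 1)
      with ((A mod 2^p + B mod 2^p + 1) + (A/2^p + B/2^p) * 2^p) by lia.
    rewrite Z.div_add by lia. ring. }
  rewrite !Z.testbit_spec', Hquot by lia.
  rewrite <- Z.add_mod_idemp_l, <- (Z.add_mod_idemp_l (A / 2^p)),
    <- (Z.add_mod_idemp_r (A / 2^p mod 2)) by lia.
  symmetry.
  rewrite <- Z.add_mod_idemp_l, <- (Z.add_mod_idemp_r (A / 2^p mod 2)), !Z.mod_mod by lia.
  reflexivity.
Qed.

(** * Odd parts and the odd Collatz terms *)

Fixpoint two_adic (p : positive) : nat :=
  match p with xO q => S (two_adic q) | _ => O end.
Fixpoint odd_part (p : positive) : positive :=
  match p with xO q => odd_part q | _ => p end.

Lemma odd_part_spec p : Zpos p = 2 ^ Z.of_nat (two_adic p) * Zpos (odd_part p).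
Proof.
  induction p; cbn [two_adic odd_part]; try lia.
  rewrite Pos2Z.inj_xO, IHp, Nat2Z.inj_succ, Z.pow_succ_r by lia. ring.
Qed.

Lemma odd_part_odd p : Z.odd (Zpos (odd_part p)) = true.
Proof. induction p; simpl; auto. Qed.

Lemma odd_part_spec_nat p :
  Pos.to_nat p = (2 ^ two_adic p * Pos.to_nat (odd_part p))%nat.
Proof.
  induction p; cbn [two_adic odd_part].
  - rewrite Nat.pow_0_r. lia.
  - rewrite Pos2Nat.inj_xO, IHp, Nat.pow_succ_r'. lia.
  - reflexivity.
Qed.

Lemma odd_part_odd_nat p : Nat.odd (Pos.to_nat (odd_part p)) = true.
Proof.
  induction p; simpl; auto.
  rewrite Pos2Nat.inj_xI, Nat.odd_succ, Nat.even_mul. reflexivity.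
Qed.

Fixpoint chain (p : positive) (k : nat) : positive :=
  match k with
  | O => p
  | S k' => Pos.succ (3 * odd_part (chain p k'))
  end.

Definition odd_term (p : positive) (k : nat) : Z := Zpos (odd_part (chain p k)).
Definition halvings (p : positive) (k : nat) : Z := Z.of_nat (two_adic (chain p k)).

Lemma halvings_nonneg p k : 0 <= halvings p k.
Proof. unfold halvings; lia. Qed.

Lemma odd_term_pos p k : 0 < odd_term p k.
Proof. unfold odd_term; lia. Qed.

Lemma odd_term_odd p k : Z.odd (odd_term p k) = true.
Proof. apply odd_part_odd. Qed.

Lemma odd_term_succ p k :
  3 * odd_term p k + 1 = 2 ^ halvings p (S k) * odd_term p (S k).
Proof. unfold odd_term, halvings. rewrite <- odd_part_spec. simpl chain. lia. Qed.

(** [3 o + 1] is even, so every step after the first halves at least once. *)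
Lemma halvings_succ_pos p k : 1 <= halvings p (S k).
Proof.
  unfold halvings. simpl chain.
  destruct (odd_part (chain p k)) eqn:E; simpl; try lia.
  pose proof (odd_part_odd (chain p k)) as Hodd. rewrite E in Hodd. discriminate.
Qed.

Definition odd_count (z n : nat) : nat :=
  length (filter (fun j => Nat.odd (Nat.iter j collatzT z)) (seq 0 n)).

Lemma odd_count_succ z n :
  odd_count z (S n) =
  (odd_count z n + if Nat.odd (Nat.iter n collatzT z) then 1 else 0)%nat.
Proof.
  unfold odd_count. rewrite seq_S, filter_app, length_app. simpl.
  destruct (Nat.odd _); simpl; lia.
Qed.

Lemma collatzT_even n : collatzT (2 * n) = n.
Proof.
  unfold collatzT. rewrite Nat.even_mul. cbn [Nat.even orb].
  rewrite Nat.div2_div, Nat.mul_comm. apply Nat.div_mul. lia.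
Qed.

Lemma collatzT_odd n : Nat.odd n = true -> collatzT n = ((3 * n + 1) / 2)%nat.
Proof.
  intros H. unfold collatzT. rewrite <- Nat.negb_odd, H. apply Nat.div2_div.
Qed.

Lemma orbit_halvings z j : forall o n, Nat.odd o = true ->
  Nat.iter n collatzT z = (2 ^ j * o)%nat ->
  Nat.iter (n + j) collatzT z = o /\ odd_count z (n + j) = odd_count z n.
Proof.
  induction j as [|j IH]; intros o n Ho Hn.
  - rewrite Nat.add_0_r, Hn. simpl. split; lia.
  - replace (n + S j)%nat with (S n + j)%nat by lia.
    assert (Hsucc : Nat.iter (S n) collatzT z = (2 ^ j * o)%nat).
    { simpl Nat.iter at 1. rewrite Hn, Nat.pow_succ_r', <- Nat.mul_assoc.
      apply collatzT_even. }
    destruct (IH o (S n) Ho Hsucc) as [Hit Hcnt]. split; [exact Hit|].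
    rewrite Hcnt, odd_count_succ, Hn, Nat.pow_succ_r', <- Nat.mul_assoc, Nat.odd_mul.
    simpl. lia.
Qed.

Lemma orbit_reaches_odd_term p k : exists n,
  Nat.iter n collatzT (Pos.to_nat p) = Pos.to_nat (odd_part (chain p k)) /\
  odd_count (Pos.to_nat p) n = k.
Proof.
  induction k as [|k [n [Hn Hc]]].
  - destruct (orbit_halvings (Pos.to_nat p) (two_adic p) (Pos.to_nat (odd_part p)) 0)
      as [Hit Hcnt]; [apply odd_part_odd_nat|apply odd_part_spec_nat|].
    exists (two_adic p). auto.
  - pose proof (halvings_succ_pos p k) as Hj. unfold halvings in Hj.
    set (q := chain p (S k)) in *.
    assert (Hq : Pos.to_nat q = (3 * Pos.to_nat (odd_part (chain p k)) + 1)%nat).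
    { unfold q. cbn [chain]. rewrite Pos2Nat.inj_succ, Pos2Nat.inj_mul. simpl. lia. }
    destruct (two_adic q) as [|j] eqn:Ej; [lia|].
    pose proof (odd_part_spec_nat q) as Hs. rewrite Ej in Hs.
    destruct (orbit_halvings (Pos.to_nat p) j (Pos.to_nat (odd_part q)) (S n))
      as [Hit Hcnt]; [apply odd_part_odd_nat| |].
    + simpl Nat.iter at 1. rewrite Hn, collatzT_odd by apply odd_part_odd_nat.
      rewrite <- Hq, Hs, Nat.pow_succ_r', <- Nat.mul_assoc, Nat.mul_comm.
      apply Nat.div_mul. lia.
    + exists (S n + j)%nat. split; [exact Hit|].
      rewrite Hcnt, odd_count_succ, Hc, Hn, odd_part_odd_nat. lia.
Qed.

Lemma odd_term_kth p k : kth_odd_term (Pos.to_nat p) k (Pos.to_nat (odd_part (chain p k))).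
Proof.
  destruct (orbit_reaches_odd_term p k) as [n [Hn Hc]].
  exists n. split; [exact Hn|split; [apply odd_part_odd_nat|exact Hc]].
Qed.

(** * The space-time diagram

    Row [-k] of the diagram carries [chain p k = 2^(j_k) o_k]: the digits of
    [o_k] end (least significant bit) at column [anchor p k - 1], followed by
    [j_k] zeros which stay half-defined.  Definedness spreads westwards along
    each row at one cell per step, starting at the anchor at time
    [birth p k]; a cell of row [-(k+1)] becomes half-defined one step after
    the cell north-east of it became defined. *)

Fixpoint anchor (p : positive) (k : nat) : Z :=
  match k with O => - halvings p O | S r => anchor p r - halvings p (S r) end.

(** Time at which the anchor cell of row [-k] becomes defined. *)
Fixpoint birth (p : positive) (k : nat) : Z :=
  match k with O => 1 | S r => birth p r + halvings p (S r) + 1 end.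

(** Easternmost cell of row [-k] that ever carries a digit. *)
Definition last_col (p : positive) (k : nat) : Z := anchor p k + halvings p k - 1.

(** Time at which cell [x] of row [-k] becomes half-defined. *)
Definition half_time (p : positive) (k : nat) (x : Z) : Z :=
  match k with O => 0 | S r => birth p r + anchor p r - 1 - x end.

Definition is_def (p : positive) (t : Z) (k : nat) (x : Z) : Prop :=
  x <= anchor p k /\ birth p k + anchor p k - 1 - x <= t /\ birth p k <= t.

(** The same after the non-local rule of step [t] (which defines the anchor
    one step early). *)
Definition is_def_nl (p : positive) (t : Z) (k : nat) (x : Z) : Prop :=
  is_def p t k x \/ (x = anchor p k /\ birth p k <= t + 1).

Definition is_half (p : positive) (t : Z) (k : nat) (x : Z) : Prop := x <= last_col p k /\ half_time p k x <= t.

Lemma birth_pos p k : 1 <= birth p k.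
Proof.
  induction k as [|k IH]; simpl; [lia|]. pose proof (halvings_nonneg p (S k)). lia.
Qed.

(** All the timing facts below are linear arithmetic on the recurrences for
    [anchor] and [birth], once the row index is split into [0] or [r+1]. *)
Ltac timing_arith p k :=
  unfold is_def_nl, is_def, is_half, last_col, half_time in *;
  pose proof (halvings_nonneg p k); pose proof (birth_pos p k);
  destruct k as [|?r]; cbn [anchor birth] in *;
  [ lia
  | pose proof (halvings_succ_pos p r); pose proof (halvings_nonneg p r);
    pose proof (birth_pos p r); lia ].

Section Timing.
Variables (p : positive) (t : Z) (k : nat) (x : Z).

Lemma def_persists : is_def_nl p t k x -> is_def p (t+1) k x.
Proof. timing_arith p k. Qed.

Lemma def_spreads_west : is_def_nl p t k (x+1) -> is_def p (t+1) k x.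
Proof. timing_arith p k. Qed.

Lemma def_only_from_east :
  ~ is_def_nl p t k x -> ~ is_def_nl p t k (x+1) -> ~ is_def p (t+1) k x.
Proof. timing_arith p k. Qed.

Lemma def_was_half : 0 <= t -> is_def p (t+1) k x -> is_def_nl p t k x \/ is_half p t k x.
Proof. timing_arith p k. Qed.

Lemma half_persists : is_half p t k x -> is_half p (t+1) k x.
Proof. timing_arith p k. Qed.

Lemma def_nl_bound : is_def_nl p t k x -> x <= anchor p k.
Proof. timing_arith p k. Qed.

Lemma def_nl_fresh :
  is_def_nl p t k x -> ~ is_def p t k x -> x = anchor p k /\ birth p k = t + 1.
Proof. timing_arith p k. Qed.

Lemma half_east_closed y :
  is_half p t k x -> x <= y -> y <= anchor p k - 1 -> is_half p t k y.
Proof. timing_arith p k. Qed.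

Lemma lsb_half_birth : 0 <= t -> is_half p t k (anchor p k - 1) -> birth p k <= t + 1.
Proof. timing_arith p k. Qed.

Lemma lsb_ready : 0 <= t -> birth p k = t + 1 ->
  is_half p t k (anchor p k - 1) /\ ~ is_def p t k (anchor p k - 1).
Proof. timing_arith p k. Qed.

Lemma row0_half_static : 0 <= t -> ~ is_half p t 0 x -> ~ is_half p (t+1) 0 x.
Proof. unfold is_half, half_time. lia. Qed.

End Timing.

Section TimingNextRow.
Variables (p : positive) (t : Z) (r : nat) (x : Z).

Lemma half_below_def : is_def_nl p t r (x+1) -> is_half p (t+1) (S r) x.
Proof. timing_arith p r. Qed.

Lemma half_birth : 0 <= t -> is_half p (t+1) (S r) x -> ~ is_half p t (S r) x ->
  ~ is_def_nl p t r x /\ is_half p t r x /\ is_def_nl p t r (x+1).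
Proof. timing_arith p r. Qed.

End TimingNextRow.

(** * Contents of the rows

    Cell [x] of row [-k] holds bit [anchor p k - 1 - x] of [o_k] as sum bit,
    and as carry bit the carry leaving that bit position in the addition
    [o_k + 2 o_k + 1]. *)
Definition sum_bit (p : positive) (k : nat) (x : Z) : bool :=
  Z.testbit (odd_term p k) (anchor p k - 1 - x).
Definition carry_bit (p : positive) (k : nat) (x : Z) : bool :=
  carry_in (odd_term p k) (2 * odd_term p k) (anchor p k - x) =? 1.

Lemma sum_bit_east p k x : anchor p k <= x -> sum_bit p k x = false.
Proof. intros. unfold sum_bit. apply Z.testbit_neg_r. lia. Qed.

Lemma sum_bit_lsb p k : sum_bit p k (anchor p k - 1) = true.
Proof.
  unfold sum_bit. replace (anchor p k - 1 - (anchor p k - 1)) with 0 by lia.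
  rewrite Z.bit0_odd. apply odd_term_odd.
Qed.

(** The non-local rule supplies the carry-in 1 at the anchor. *)
Lemma carry_bit_anchor p k : carry_bit p k (anchor p k) = true.
Proof. unfold carry_bit. rewrite Z.sub_diag, carry_in_0. reflexivity. Qed.

Definition msb_col (p : positive) (k : nat) : Z := anchor p k - 1 - Z.log2 (odd_term p k).

Lemma sum_bit_msb p k x : sum_bit p k x = true -> msb_col p k <= x.
Proof.
  unfold sum_bit, msb_col. intros H.
  destruct (Z_le_gt_dec (anchor p k - 1 - Z.log2 (odd_term p k)) x); auto.
  rewrite Z.bits_above_log2 in H; [discriminate| |lia].
  pose proof (odd_term_pos p k). lia.
Qed.

Lemma b2z_carry_in A B q : 0 <= q -> Z.b2z (carry_in A B q =? 1) = carry_in A B q.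
Proof.
  intros Hq. pose proof (carry_in_range A B q Hq).
  destruct (Z.eqb_spec (carry_in A B q) 1); simpl; lia.
Qed.

(** The local rule's sum on rows [-r] and [-(r+1)]: since
    [o_r + 2 o_r + 1 = 2^(j_(r+1)) o_(r+1)], the sum bit of a cell of row
    [-(r+1)] is the parity of the cell above it, the cell north-east of it
    and the carry of the latter. *)
Lemma sum_bit_next_row p r x : x + 1 <= anchor p r ->
  sum_bit p (S r) x =
  Z.odd (Z.b2z (sum_bit p r x) + Z.b2z (sum_bit p r (x+1)) + Z.b2z (carry_bit p r (x+1))).
Proof.
  intros Hx. apply Z.b2z_inj. rewrite <- Z.bit0_odd, Z.bit0_mod.
  unfold sum_bit, carry_bit. cbn [anchor]. set (q := anchor p r - 1 - x).
  replace (anchor p r - halvings p (S r) - 1 - x) with (q - halvings p (S r)) by lia.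
  replace (anchor p r - 1 - (x + 1)) with (Z.pred q) by lia.
  replace (anchor p r - (x + 1)) with q by lia.
  rewrite <- Z.mul_pow2_bits, (Z.mul_comm (odd_term p (S r))), <- odd_term_succ
    by apply halvings_nonneg.
  replace (3 * odd_term p r + 1) with (odd_term p r + 2 * odd_term p r + 1) by ring.
  rewrite testbit_add_carry, Z.double_bits, b2z_carry_in by lia.
  reflexivity.
Qed.

Lemma carry_bit_rec p r x : x + 1 <= anchor p r ->
  carry_bit p r x =
  (2 <=? Z.b2z (sum_bit p r x) + Z.b2z (sum_bit p r (x+1)) + Z.b2z (carry_bit p r (x+1))).
Proof.
  intros Hx. unfold sum_bit, carry_bit. set (q := anchor p r - 1 - x).
  replace (anchor p r - x) with (q + 1) by lia.
  replace (anchor p r - (x + 1)) with q by lia.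
  replace (anchor p r - 1 - (x + 1)) with (Z.pred q) by lia.
  rewrite carry_in_succ, Z.double_bits, b2z_carry_in by lia.
  pose proof (carry_in_range (odd_term p r) (2 * odd_term p r) q ltac:(lia)).
  destruct (Z.testbit (odd_term p r) q), (Z.testbit (odd_term p r) (Z.pred q));
  assert (carry_in (odd_term p r) (2 * odd_term p r) q = 0 \/
          carry_in (odd_term p r) (2 * odd_term p r) q = 1) as [-> | ->] by lia;
  reflexivity.
Qed.

(** * Snapshots of the evolution *)
Lemma is_def_dec p t k x : {is_def p t k x} + {~ is_def p t k x}.
Proof.
  unfold is_def.
  destruct (Z_le_dec x (anchor p k)), (Z_le_dec (birth p k + anchor p k - 1 - x) t),
    (Z_le_dec (birth p k) t); (left; tauto) || (right; lia).
Qed.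

Lemma is_def_nl_dec p t k x : {is_def_nl p t k x} + {~ is_def_nl p t k x}.
Proof.
  unfold is_def_nl. destruct (is_def_dec p t k x); [left; tauto|].
  destruct (Z.eq_dec x (anchor p k)), (Z_le_dec (birth p k) (t+1));
    (left; right; tauto) || (right; tauto || lia).
Qed.

Lemma is_half_dec p t k x : {is_half p t k x} + {~ is_half p t k x}.
Proof.
  unfold is_half. destruct (Z_le_dec x (last_col p k)), (Z_le_dec (half_time p k x) t);
    (left; tauto) || (right; lia).
Qed.

Definition row_state (p : positive) (t : Z) (k : nat) (x : Z) : state :=
  if is_def_dec p t k x then Def (sum_bit p k x) (carry_bit p k x)
  else if is_half_dec p t k x then Half (sum_bit p k x) else Und.

Definition row_state_nl (p : positive) (t : Z) (k : nat) (x : Z) : state :=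
  if is_def_nl_dec p t k x then Def (sum_bit p k x) (carry_bit p k x)
  else if is_half_dec p t k x then Half (sum_bit p k x) else Und.

Definition of_rows (R : nat -> Z -> state) : config :=
  fun u => let '(x, y) := u in
    if Z_lt_dec 0 y then Und else R (Z.to_nat (- y)) x.

Lemma of_rows_row R k x : of_rows R (x, - Z.of_nat k) = R k x.
Proof.
  unfold of_rows. destruct (Z_lt_dec 0 (- Z.of_nat k)); [lia|]. f_equal. lia.
Qed.

Lemma of_rows_north R k x :
  of_rows R (x, - Z.of_nat k + 1) = match k with O => Und | S r => R r x end.
Proof.
  unfold of_rows. destruct (Z_lt_dec 0 (- Z.of_nat k + 1)), k as [|r]; try lia.
  - reflexivity.
  - f_equal. lia.
Qed.

Lemma of_rows_upper R x y : 0 < y -> of_rows R (x, y) = Und.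
Proof. intros Hy. unfold of_rows. destruct (Z_lt_dec 0 y); [reflexivity|lia]. Qed.

Lemma cell_cases (y : Z) : 0 < y \/ exists k : nat, y = - Z.of_nat k.
Proof.
  destruct (Z_lt_dec 0 y); [left; assumption|right; exists (Z.to_nat (- y)); lia].
Qed.

Definition snapshot (p : positive) (t : Z) : config := of_rows (row_state p t).
Definition snapshot_nl (p : positive) (t : Z) : config := of_rows (row_state_nl p t).

(** * The non-local rule on a snapshot

    At every time [t >= 0] the non-local rule fires exactly at the anchors of
    the rows that are due ([birth p k = t + 1]): there the least significant
    bit of [o_k] west of the anchor is a half-defined 1 and everything east
    of it is blank, so the anchor receives the carry-in [(0,1)]. *)

Lemma addc_west x y : addc (x, y) dirW = (x - 1, y).
Proof. unfold addc, dirW; simpl. f_equal; ring. Qed.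

Lemma addc_east x y i : addc (x, y) (scal i dirE) = (x + i, y).
Proof. unfold addc, scal, dirE; simpl. f_equal; ring. Qed.

Lemma row_state_blank p t k x :
  anchor p k <= x -> ~ is_def p t k x -> zero_or_und (row_state p t k x).
Proof.
  intros Hx Hnd. unfold row_state, zero_or_und.
  destruct (is_def_dec p t k x); [contradiction|].
  destruct (is_half_dec p t k x); [left; rewrite sum_bit_east by lia|right]; reflexivity.
Qed.

Lemma row_state_lsb p t k :
  is_half p t k (anchor p k - 1) -> ~ zero_or_und (row_state p t k (anchor p k - 1)).
Proof.
  intros Hh. unfold row_state, zero_or_und. rewrite sum_bit_lsb.
  destruct (is_def_dec p t k (anchor p k - 1));
    [|destruct (is_half_dec p t k (anchor p k - 1)); [|contradiction]];
    intros [E|E]; discriminate.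
Qed.

Lemma row_state_half_one p t k x :
  row_state p t k x = Half true -> is_half p t k x /\ x + 1 <= anchor p k.
Proof.
  unfold row_state. destruct (is_def_dec p t k x); [discriminate|].
  destruct (is_half_dec p t k x) as [Hh|]; [|discriminate].
  intros E. injection E as Hs. split; [exact Hh|].
  destruct (Z_le_gt_dec (x + 1) (anchor p k)); [assumption|].
  rewrite sum_bit_east in Hs by lia. discriminate.
Qed.

Lemma nonlocal_fires p t k x : 0 <= t ->
  nonlocal_cond (snapshot p t) (x, - Z.of_nat k) -> x = anchor p k /\ birth p k <= t + 1.
Proof.
  intros Ht [Hwest [Hhere Heast]].
  unfold snapshot in *. rewrite addc_west, of_rows_row in Hwest.
  rewrite of_rows_row in Hhere.
  destruct (row_state_half_one p t k (x - 1) Hwest) as [Hh Hx].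
  assert (Hlsb : is_half p t k (anchor p k - 1))
    by (apply (half_east_closed p t k (x - 1)); [exact Hh|lia|lia]).
  assert (Hanchor : x = anchor p k).
  { destruct (Z.eq_dec x (anchor p k)) as [|Hne]; [assumption|]. exfalso.
    apply (row_state_lsb p t k Hlsb).
    destruct (Z.eq_dec x (anchor p k - 1)) as [<-|]; [exact Hhere|].
    specialize (Heast (anchor p k - 1 - x) ltac:(lia)).
    rewrite addc_east, of_rows_row in Heast.
    replace (x + (anchor p k - 1 - x)) with (anchor p k - 1) in Heast by ring.
    exact Heast. }
  split; [exact Hanchor|]. exact (lsb_half_birth p t k Ht Hlsb).
Qed.

Lemma nonlocal_fires_at_birth p t k : 0 <= t -> birth p k = t + 1 ->
  nonlocal_cond (snapshot p t) (anchor p k, - Z.of_nat k).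
Proof.
  intros Ht Hb. destruct (lsb_ready p t k Ht Hb) as [Hh Hnd].
  unfold nonlocal_cond, snapshot.
  rewrite addc_west, of_rows_row. split; [|split].
  - unfold row_state. destruct (is_def_dec p t k (anchor p k - 1)); [contradiction|].
    destruct (is_half_dec p t k (anchor p k - 1)); [|contradiction].
    rewrite sum_bit_lsb. reflexivity.
  - rewrite of_rows_row. apply row_state_blank; unfold is_def; lia.
  - intros i Hi. rewrite addc_east, of_rows_row. apply row_state_blank; unfold is_def; lia.
Qed.

Lemma snapshot_nonlocal p t : 0 <= t -> nonlocal_step (snapshot p t) = snapshot_nl p t.
Proof.
  intros Ht. apply functional_extensionality. intros [x y].
  unfold nonlocal_step.
  destruct (excluded_middle_informative (nonlocal_cond (snapshot p t) (x, y))) as [Hc|Hc];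
    destruct (cell_cases y) as [Hy|[k ->]].
  - exfalso. destruct Hc as [Hwest _].
    unfold snapshot in Hwest. rewrite addc_west, of_rows_upper in Hwest by lia. discriminate.
  - destruct (nonlocal_fires p t k x Ht Hc) as [-> Hb].
    unfold snapshot_nl. rewrite of_rows_row. unfold row_state_nl.
    destruct (is_def_nl_dec p t k (anchor p k)) as [|Hnd]; [|exfalso; apply Hnd; right; lia].
    rewrite sum_bit_east, carry_bit_anchor by lia. reflexivity.
  - unfold snapshot, snapshot_nl. rewrite !of_rows_upper by lia. reflexivity.
  - unfold snapshot, snapshot_nl. rewrite !of_rows_row. unfold row_state, row_state_nl.
    destruct (is_def_nl_dec p t k x) as [Hd'|Hd'], (is_def_dec p t k x) as [Hd|Hd];
      try reflexivity.
    + destruct (def_nl_fresh p t k x Hd' Hd) as [-> Hb].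
      exfalso. exact (Hc (nonlocal_fires_at_birth p t k Ht Hb)).
    + exfalso. apply Hd'. left. exact Hd.
Qed.

(** * The local rule on a snapshot *)

Definition local_rule (here east north north_east : state) : state :=
  match here with
  | Half s =>
      match east with
      | Def s' c' => Def s (2 <=? b2z s + b2z s' + b2z c')
      | _ => here
      end
  | Und =>
      match north with
      | Half s =>
          match north_east with
          | Def s' c' => Half (Z.odd (b2z s + b2z s' + b2z c'))
          | _ => here
          end
      | _ => here
      end
  | Def _ _ => here
  end.

Lemma local_step_rule C u :
  local_step C u =
  local_rule (C u) (C (addc u dirE)) (C (addc u dirN)) (C (addc (addc u dirN) dirE)).
Proof. reflexivity. Qed.

Definition row_above (p : positive) (t : Z) (k : nat) (x : Z) : state :=
  match k with O => Und | S r => row_state_nl p t r x end.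

Section LocalStep.
Variables (p : positive) (t : Z) (k : nat) (x : Z).
Hypothesis (Ht : 0 <= t).

Lemma step_defined : is_def_nl p t k x -> row_state p (t+1) k x = row_state_nl p t k x.
Proof.
  intros Hd. unfold row_state, row_state_nl.
  destruct (is_def_nl_dec p t k x); [|contradiction].
  destruct (is_def_dec p (t+1) k x) as [|Hnd]; [reflexivity|].
  exfalso. exact (Hnd (def_persists p t k x Hd)).
Qed.

Lemma step_half : ~ is_def_nl p t k x -> is_half p t k x ->
  row_state p (t+1) k x =
  match row_state_nl p t k (x+1) with
  | Def s' c' => Def (sum_bit p k x) (2 <=? b2z (sum_bit p k x) + b2z s' + b2z c')
  | _ => Half (sum_bit p k x)
  end.
Proof.
  intros Hnd Hh. unfold row_state at 1, row_state_nl at 1.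
  destruct (is_def_nl_dec p t k (x+1)) as [Hd|Hnd'].
  - destruct (is_def_dec p (t+1) k x) as [|Hnd''];
      [|exfalso; exact (Hnd'' (def_spreads_west p t k x Hd))].
    rewrite (carry_bit_rec p k x) by (pose proof (def_nl_bound p t k (x+1) Hd); lia).
    reflexivity.
  - destruct (is_def_dec p (t+1) k x) as [Hd|];
      [exfalso; exact (def_only_from_east p t k x Hnd Hnd' Hd)|].
    destruct (is_half_dec p (t+1) k x) as [|Hnh];
      [|exfalso; exact (Hnh (half_persists p t k x Hh))].
    destruct (is_half_dec p t k (x+1)); reflexivity.
Qed.

Lemma step_blank : ~ is_def_nl p t k x -> ~ is_half p t k x ->
  row_state p (t+1) k x =
  match row_above p t k x with
  | Half s =>
      match row_above p t k (x+1) with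
      | Def s' c' => Half (Z.odd (b2z s + b2z s' + b2z c'))
      | _ => Und
      end
  | _ => Und
  end.
Proof.
  intros Hnd Hnh. unfold row_state.
  destruct (is_def_dec p (t+1) k x) as [Hd|];
    [exfalso; destruct (def_was_half p t k x Ht Hd); contradiction|].
  destruct k as [|r]; simpl row_above.
  - destruct (is_half_dec p (t+1) 0 x) as [Hh|]; [|reflexivity].
    exfalso. exact (row0_half_static p t x Ht Hnh Hh).
  - destruct (is_half_dec p (t+1) (S r) x) as [Hh|Hnh'].
    + destruct (half_birth p t r x Ht Hh Hnh) as [Hnd_r [Hh_r Hd_r]].
      unfold row_state_nl. destruct (is_def_nl_dec p t r x); [contradiction|].
      destruct (is_half_dec p t r x); [|contradiction].
      destruct (is_def_nl_dec p t r (x+1)); [|contradiction].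
      rewrite (sum_bit_next_row p r x) by (pose proof (def_nl_bound p t r (x+1) Hd_r); lia).
      reflexivity.
    + unfold row_state_nl. destruct (is_def_nl_dec p t r x); [reflexivity|].
      destruct (is_half_dec p t r x); [|reflexivity].
      destruct (is_def_nl_dec p t r (x+1)) as [Hd_r|];
        [exfalso; exact (Hnh' (half_below_def p t r x Hd_r))|].
      destruct (is_half_dec p t r (x+1)); reflexivity.
Qed.

Lemma row_step :
  local_rule (row_state_nl p t k x) (row_state_nl p t k (x+1))
    (row_above p t k x) (row_above p t k (x+1)) = row_state p (t+1) k x.
Proof.
  destruct (is_def_nl_dec p t k x) as [Hd|Hnd].
  - rewrite step_defined by exact Hd.
    assert (Hnl : row_state_nl p t k x = Def (sum_bit p k x) (carry_bit p k x))
      by (unfold row_state_nl; destruct (is_def_nl_dec p t k x); [reflexivity|contradiction]).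
    rewrite Hnl. reflexivity.
  - assert (Hnl : row_state_nl p t k x =
                  if is_half_dec p t k x then Half (sum_bit p k x) else Und)
      by (unfold row_state_nl; destruct (is_def_nl_dec p t k x); [contradiction|reflexivity]).
    rewrite Hnl. destruct (is_half_dec p t k x) as [Hh|Hnh].
    + rewrite step_half by assumption. simpl.
      destruct (row_state_nl p t k (x+1)); reflexivity.
    + rewrite step_blank by assumption. simpl.
      destruct (row_above p t k x); reflexivity.
Qed.

End LocalStep.

Lemma snapshot_step p t : 0 <= t -> F (snapshot p t) = snapshot p (t + 1).
Proof.
  intros Ht. apply functional_extensionality. intros [x y].
  unfold F. rewrite local_step_rule, snapshot_nonlocal by exact Ht.
  replace (addc (x, y) dirE) with (x + 1, y) by (unfold addc; simpl; f_equal; ring).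
  replace (addc (x, y) dirN) with (x, y + 1) by (unfold addc; simpl; f_equal; ring).
  replace (addc (x, y + 1) dirE) with (x + 1, y + 1) by (unfold addc; simpl; f_equal; ring).
  unfold snapshot_nl, snapshot.
  destruct (cell_cases y) as [Hy|[k ->]].
  - rewrite !of_rows_upper by lia. reflexivity.
  - rewrite !of_rows_row, !of_rows_north. exact (row_step p t k x Ht).
Qed.

(** * The initial configuration *)

(** The [i]-th digit (counted from [1] at the right) of a binary string,
    padded with zeros on the left, as read by [c0]. *)
Definition digit (w : list bool) (i : nat) : bool :=
  if (i <=? length w)%nat then nth (length w - i) w false else false.

Lemma c0_digits w x y :
  c0 w (x, y) = if (y =? 0) && (x <=? -1) then Half (digit w (Z.to_nat (- x))) else Und.
Proof.
  unfold c0, digit. destruct ((y =? 0) && (x <=? -1)); [|reflexivity].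
  destruct (Z.to_nat (- x) <=? length w)%nat; reflexivity.
Qed.

Lemma digit_snoc_last w b : digit (w ++ [b]) 1 = b.
Proof.
  unfold digit. rewrite length_app. simpl length.
  rewrite (proj2 (Nat.leb_le _ _)) by lia.
  rewrite app_nth2 by lia. replace (length w + 1 - 1 - length w)%nat with O by lia.
  reflexivity.
Qed.

Lemma digit_snoc_succ w b i : (1 <= i)%nat -> digit (w ++ [b]) (S i) = digit w i.
Proof.
  intros Hi. unfold digit. rewrite length_app. simpl length.
  destruct (Nat.leb_spec i (length w)), (Nat.leb_spec (S i) (length w + 1));
    try lia; try reflexivity.
  rewrite app_nth1 by lia. f_equal. lia.
Qed.

Lemma binrep_digit p : forall i : nat, (1 <= i)%nat ->
  digit (binrep p) i = Z.testbit (Zpos p) (Z.of_nat i - 1).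
Proof.
  induction p as [q IH|q IH|]; intros i Hi; cbn [binrep].
  - destruct i as [|[|i]]; [lia|rewrite digit_snoc_last; reflexivity|].
    rewrite digit_snoc_succ, IH, Pos2Z.inj_xI by lia.
    replace (Z.of_nat (S (S i)) - 1) with (Z.succ (Z.of_nat (S i) - 1)) by lia.
    rewrite Z.testbit_odd_succ by lia. reflexivity.
  - destruct i as [|[|i]]; [lia|rewrite digit_snoc_last; reflexivity|].
    rewrite digit_snoc_succ, IH, Pos2Z.inj_xO by lia.
    replace (Z.of_nat (S (S i)) - 1) with (Z.succ (Z.of_nat (S i) - 1)) by lia.
    rewrite Z.testbit_even_succ by lia. reflexivity.
  - destruct i as [|[|i]]; [lia|reflexivity|].
    unfold digit. cbn [length]. rewrite (proj2 (Nat.leb_gt _ _)) by lia.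
    symmetry. apply Z.bits_above_log2; change (Z.log2 1) with 0; lia.
Qed.

Lemma nothing_defined_at_start p k x : ~ is_def p 0 k x.
Proof. timing_arith p k. Qed.

Lemma only_row0_at_start p r x : ~ is_half p 0 (S r) x.
Proof. timing_arith p r. Qed.

Lemma row0_at_start p x : is_half p 0 0 x <-> x <= -1.
Proof. unfold is_half, last_col, half_time. cbn [anchor]. lia. Qed.

Lemma snapshot_init p : snapshot p 0 = c0 (binrep p).
Proof.
  apply functional_extensionality. intros [x y]. rewrite c0_digits. unfold snapshot.
  destruct (cell_cases y) as [Hy|[k ->]].
  - rewrite of_rows_upper, (proj2 (Z.eqb_neq y 0)) by lia. reflexivity.
  - rewrite of_rows_row. unfold row_state.
    destruct (is_def_dec p 0 k x) as [Hd|]; [exfalso; exact (nothing_defined_at_start p k x Hd)|].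
    destruct k as [|r].
    + destruct (is_half_dec p 0 0 x) as [Hh|Hnh].
      * apply row0_at_start in Hh. rewrite (proj2 (Z.leb_le x (-1))) by lia.
        change ((- Z.of_nat 0 =? 0) && true) with true. cbv iota.
        f_equal. rewrite binrep_digit by lia.
        unfold sum_bit, odd_term. cbn [anchor]. unfold halvings. cbn [chain].
        rewrite (odd_part_spec p), Z.mul_comm, Z.mul_pow2_bits by lia.
        f_equal. lia.
      * rewrite row0_at_start in Hnh. rewrite (proj2 (Z.leb_gt x (-1))) by lia.
        destruct (- Z.of_nat 0 =? 0); reflexivity.
    + rewrite (proj2 (Z.eqb_neq _ 0)) by lia.
      destruct (is_half_dec p 0 (S r) x) as [Hh|]; [|reflexivity].
      exfalso. exact (only_row0_at_start p r x Hh).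
Qed.

Lemma iter_F_snapshot p n : Nat.iter n F (c0 (binrep p)) = snapshot p (Z.of_nat n).
Proof.
  induction n as [|n IH].
  - symmetry. apply snapshot_init.
  - simpl Nat.iter. rewrite IH, snapshot_step by lia. f_equal. lia.
Qed.

(** * The limit configuration *)

Definition row_final (p : positive) (k : nat) (x : Z) : state :=
  if Z_le_dec x (anchor p k) then Def (sum_bit p k x) (carry_bit p k x)
  else if Z_le_dec x (last_col p k) then Half (sum_bit p k x) else Und.

Lemma row_state_final p t k x :
  Z.abs (birth p k + anchor p k - 1 - x) + birth p k + Z.abs (half_time p k x) <= t ->
  row_state p t k x = row_final p k x.
Proof.
  intros Ht. pose proof (birth_pos p k). unfold row_state, row_final.
  destruct (is_def_dec p t k x) as [Hd|Hd]; unfold is_def in Hd;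
    destruct (Z_le_dec x (anchor p k)); try lia; [reflexivity|].
  destruct (is_half_dec p t k x) as [Hh|Hh]; unfold is_half in Hh;
    destruct (Z_le_dec x (last_col p k)); lia || reflexivity.
Qed.

Lemma limit_row p L k x : is_limit (binrep p) L -> L (x, - Z.of_nat k) = row_final p k x.
Proof.
  intros HL. destruct (HL (x, - Z.of_nat k)) as [N HN].
  set (T := Z.to_nat (Z.abs (birth p k + anchor p k - 1 - x) + birth p k
                      + Z.abs (half_time p k x))).
  rewrite <- (HN (Nat.max N T)), iter_F_snapshot by lia.
  unfold snapshot. rewrite of_rows_row. apply row_state_final. lia.
Qed.

Definition row_end (p : positive) (k : nat) : Z := Z.max (anchor p k) (last_col p k).

Lemma row_final_defined p k x : sumbit (row_final p k x) <> None <-> x <= row_end p k.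
Proof.
  unfold row_final, row_end.
  destruct (Z_le_dec x (anchor p k)); [|destruct (Z_le_dec x (last_col p k))];
    simpl; split; intros; congruence || lia.
Qed.

Lemma row_final_ones p k x : sumbit (row_final p k x) = Some true -> msb_col p k <= x.
Proof.
  unfold row_final. intros H. apply sum_bit_msb.
  destruct (Z_le_dec x (anchor p k)); [|destruct (Z_le_dec x (last_col p k))];
    simpl in H; congruence.
Qed.

Lemma row_final_bits p k x : x <= row_end p k ->
  sumbit (row_final p k x) =
  Some (Z.testbit (2 ^ (row_end p k - anchor p k + 1) * odd_term p k) (row_end p k - x)).
Proof.
  intros Hx. unfold row_end in *.
  rewrite Z.mul_comm, Z.mul_pow2_bits by lia.
  replace (Z.max (anchor p k) (last_col p k) - x
           - (Z.max (anchor p k) (last_col p k) - anchor p k + 1))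
    with (anchor p k - 1 - x) by lia.
  unfold row_final. destruct (Z_le_dec x (anchor p k)); [reflexivity|].
  destruct (Z_le_dec x (last_col p k)); [reflexivity|lia].
Qed.

Lemma rowval_bits L y0 x1 V n : 0 <= V ->
  (forall i : nat, (i < n)%nat ->
     sumbit (L (x1 - Z.of_nat i, y0)) = Some (Z.testbit V (Z.of_nat i))) ->
  rowval L y0 x1 n = V mod 2 ^ Z.of_nat n.
Proof.
  intros HV. induction n as [|n IH]; intros Hb.
  - simpl. rewrite Z.mod_1_r. reflexivity.
  - simpl rowval. rewrite IH by (intros; apply Hb; lia).
    rewrite Hb, Nat2Z.inj_succ, <- Z.add_1_r, mod_pow2_succ by lia.
    destruct (Z.testbit V (Z.of_nat n)); simpl; ring.
Qed.

Lemma rowval_row_final p k L y0 : (forall x, L (x, y0) = row_final p k x) ->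
  rowval L y0 (row_end p k) (Z.to_nat (row_end p k - msb_col p k + 1))
  = 2 ^ (row_end p k - anchor p k + 1) * odd_term p k.
Proof.
  intros Hrow. set (e := row_end p k - anchor p k + 1).
  pose proof (odd_term_pos p k) as Ho.
  assert (He : 1 <= e) by (unfold e, row_end; lia).
  pose proof (Z.pow_pos_nonneg 2 e ltac:(lia) ltac:(lia)) as Hpow.
  rewrite (rowval_bits L y0 (row_end p k) (2 ^ e * odd_term p k)).
  - apply Z.mod_small. split; [nia|].
    pose proof (Z.log2_spec (odd_term p k) Ho) as [_ Hlog].
    pose proof (Z.log2_nonneg (odd_term p k)).
    replace (Z.of_nat (Z.to_nat (row_end p k - msb_col p k + 1)))
      with (e + Z.succ (Z.log2 (odd_term p k))) by (unfold e, msb_col, row_end; lia).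
    rewrite Z.pow_add_r by lia. apply Z.mul_lt_mono_pos_l; lia.
  - nia.
  - intros i Hi. rewrite Hrow, row_final_bits by lia. do 2 f_equal. lia.
Qed.

Theorem mainTheorem2 (z : nat) (hz : (1 <= z)%nat) (y0 : Z) (hy0 : y0 <= 0)
  (L : config) (hL : is_limit (binrep (Pos.of_nat z)) L) :
  exists x1 : Z,
    (forall x : Z, sumbit (L (x, y0)) <> None <-> x <= x1) /\
    (exists M : Z, forall x : Z, sumbit (L (x, y0)) = Some true -> M <= x) /\
    (exists (M : Z) (m o : nat),
       (forall x : Z, sumbit (L (x, y0)) = Some true -> M <= x) /\
       kth_odd_term z (Z.to_nat (- y0)) o /\
       rowval L y0 x1 (Z.to_nat (x1 - M + 1)) = 2 ^ Z.of_nat m * Z.of_nat o).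
Proof.
  set (p := Pos.of_nat z) in *. set (k := Z.to_nat (- y0)).
  assert (Hz : z = Pos.to_nat p) by (unfold p; rewrite Nat2Pos.id; lia).
  assert (Hrow : forall x, L (x, y0) = row_final p k x).
  { intros x. replace y0 with (- Z.of_nat k) by lia. apply limit_row, hL. }
  assert (Hones : forall x, sumbit (L (x, y0)) = Some true -> msb_col p k <= x)
    by (intros x; rewrite Hrow; apply row_final_ones).
  exists (row_end p k). split; [|split].
  - intros x. rewrite Hrow. apply row_final_defined.
  - exists (msb_col p k). exact Hones.
  - exists (msb_col p k), (Z.to_nat (row_end p k - anchor p k + 1)),
      (Pos.to_nat (odd_part (chain p k))).
    split; [exact Hones|split].
    + rewrite Hz. apply odd_term_kth.
    + rewrite (rowval_row_final p k L y0 Hrow), positive_nat_Z, Z2Nat.id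
        by (unfold row_end; lia).
      reflexivity.
Qed.
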